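(* For every collectible reward decomposition MDP with $n$ rewards and every discount factor $\gamma\in(0,1)$, the value $\text{NN}$ of the Nearest Neighbor policy satisfies $\frac{\text{NN}}{\text{OPT}}\ge\frac{1}{n}$.
   Context: A collectible reward decomposition MDP is an MDP with deterministic dynamics, an initial state $s_0$, discount $\gamma$, and $n$ reward states $s_1,\dots,s_n$; visiting $s_i$ for the first time yields reward $1$ and each reward can be collected only once. Let $d_{i,j}$ be the length of the shortest path between $s_i$ and $s_j$ (with $s_0$ the start). The value of a policy is the (expected) discounted return $\sum_k \gamma^{T_k}$, where $T_k$ is the time at which the $k$-th reward is collected. $\text{OPT}=\max_{(i_1,\dots,i_n)\in\mathrm{perm}\{1,\dots,n\}}\sum_{j=0}^{n-1}\gamma^{\sum_{t=0}^{j}d_{i_t,i_{t+1}}}$ with $i_0=s_0$, the optimal value. The Nearest Neighbor (NN) policy repeatedly moves along a shortest path to the closest (in distance $d$) not yet collected reward from its current location. *)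

From HB Require Import structures.
From mathcomp Require Import all_boot all_order all_algebra all_fingroup.
Set Implicit Arguments. Unset Strict Implicit. Unset Printing Implicit Defensive.
Import Order.TTheory GRing.Theory Num.Theory.
Local Open Scope ring_scope.

Definition reaches_in (S A : Type) (step : S -> A -> S) (x y : S) (k : nat) : Prop :=
  exists acts : seq A, size acts = k /\ foldl step x acts = y.

Definition shortest_dist (S A : Type) (step : S -> A -> S) (x y : S) (k : nat) : Prop :=
  reaches_in step x y k /\ (forall k', reaches_in step x y k' -> (k <= k')%N).

(* Key locations: index 0 is the start state s0, index (lift ord0 i) is the
   reward state s_{i+1}. *)
Definition loc (S : Type) (n : nat) (s0 : S) (r : 'I_n -> S) (i : 'I_n.+1) : S :=
  match unlift ord0 i with Some j => r j | None => s0 end.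

Definition node (n : nat) (i : 'I_n) : 'I_n.+1 := lift ord0 i.

(* Location of the agent just before the t-th collection (t = 0,1,...)
   when rewards are visited in the order s 0, s 1, ..., s (n-1):
   stop s 0 = start, stop s (t+1) = reward s t. *)
Definition stop (n : nat) (s : {perm 'I_n}) (t : nat) : 'I_n.+1 :=
  match t with
  | 0 => ord0
  | t'.+1 => match @insub nat (fun m => (m < n)%N) 'I_n t' with
             | Some i => node (s i)
             | None => ord0
             end
  end.

(* Time at which the j-th reward (0-based) is collected:
   sum_{t=0}^{j} d_{i_t, i_{t+1}}. *)
Definition route_time (n : nat) (d : 'I_n.+1 -> 'I_n.+1 -> nat)
    (s : {perm 'I_n}) (j : nat) : nat :=
  (\sum_(t < j.+1) d (stop s t) (stop s t.+1))%N.

Definition route_value (R : numDomainType) (n : nat) (gamma : R)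
    (d : 'I_n.+1 -> 'I_n.+1 -> nat) (s : {perm 'I_n}) : R :=
  \sum_(j < n) gamma ^+ route_time d s j.

Definition OPT (R : realDomainType) (n : nat) (gamma : R)
    (d : 'I_n.+1 -> 'I_n.+1 -> nat) : R :=
  \big[Num.max/0]_(s : {perm 'I_n}) route_value gamma d s.

(* s is an order of collection that the Nearest Neighbor policy may produce
   (with arbitrary tie-breaking): at each step j, the next reward s j is a
   closest (in d) reward among those not yet collected. *)
Definition is_NN_order (n : nat) (d : 'I_n.+1 -> 'I_n.+1 -> nat)
    (s : {perm 'I_n}) : Prop :=
  forall j k : 'I_n,
    (forall t : 'I_n, (t < j)%N -> s t != k) ->
    (d (stop s j) (node (s j)) <= d (stop s j) (node k))%N.

From HB Require Import structures.
From mathcomp Require Import all_boot all_order all_algebra all_fingroup.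
Set Implicit Arguments.
Unset Strict Implicit.
Unset Printing Implicit Defensive.
Import Order.TTheory GRing.Theory Num.Theory.
Local Open Scope ring_scope.

(* Let m be the distance from the start to the nearest reward.  Nearest
   Neighbor walks exactly m steps to its first reward, so NN >= gamma^m.
   Any order of collection reaches every reward no earlier than time m, so
   each of its n terms is at most gamma^m and OPT <= n gamma^m. *)

Lemma stop1 (n : nat) (s : {perm 'I_n.+1}) : stop s 1 = node (s ord0).
Proof.
rewrite /stop; case: insubP => [i _ hi|//].
by congr (node (s _)); apply: val_inj.
Qed.

Section Routes.

Variables (n : nat) (d : 'I_n.+1 -> 'I_n.+1 -> nat).

Lemma route_time0_leq (s : {perm 'I_n}) (j : nat) :
  (route_time d s 0 <= route_time d s j)%N.
Proof.
by rewrite /route_time big_ord_recl [X in (_ <= X)%N]big_ord_recl leq_add2l big_ord0.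
Qed.

Variables (R : numDomainType) (gamma : R).
Hypothesis gamma01 : 0 <= gamma <= 1.

Lemma route_value_le (s : {perm 'I_n}) (m : nat) :
  (forall j, m <= route_time d s j)%N -> route_value gamma d s <= n%:R * gamma ^+ m.
Proof.
case/andP: gamma01 => g0 g1 hm; rewrite mulr_natl -[n in _ *+ n]card_ord -sumr_const.
by apply: ler_sum => j _; apply: ler_wiXn2l.
Qed.

End Routes.

Section FirstReward.

Variables (n : nat) (d : 'I_n.+2 -> 'I_n.+2 -> nat).

Lemma route_time0 (s : {perm 'I_n.+1}) : route_time d s 0 = d ord0 (node (s ord0)).
Proof. by rewrite /route_time big_ord_recl big_ord0 addn0 stop1. Qed.

Lemma NN_first_step (s : {perm 'I_n.+1}) (k : 'I_n.+1) :
  is_NN_order d s -> (route_time d s 0 <= d ord0 (node k))%N.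
Proof. by move=> hNN; rewrite route_time0; apply: (hNN ord0). Qed.

Lemma route_value_ge_first (R : numDomainType) (gamma : R) (s : {perm 'I_n.+1}) :
  0 <= gamma -> gamma ^+ route_time d s 0 <= route_value gamma d s.
Proof.
move=> g0; rewrite /route_value big_ord_recl lerDl.
by apply: sumr_ge0 => j _; rewrite exprn_ge0.
Qed.

End FirstReward.

Section Optimum.

Variables (R : realDomainType) (n : nat) (gamma : R) (d : 'I_n.+1 -> 'I_n.+1 -> nat).

Lemma route_value_le_OPT (s : {perm 'I_n}) : route_value gamma d s <= OPT gamma d.
Proof. by rewrite /OPT (bigD1 s) //= le_max lexx. Qed.

Lemma OPT_le (c : R) :
  0 <= c -> (forall s : {perm 'I_n}, route_value gamma d s <= c) -> OPT gamma d <= c.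
Proof.
move=> c0 hc; rewrite /OPT; elim/big_ind: _ => // x y hx hy.
by rewrite ge_max hx hy.
Qed.

End Optimum.

Theorem theorem1 (R : realFieldType) (S A : finType) (step : S -> A -> S)
    (n : nat) (s0 : S) (r : 'I_n -> S) (gamma : R)
    (d : 'I_n.+1 -> 'I_n.+1 -> nat) (sNN : {perm 'I_n}) :
  (0 < n)%N ->
  injective r ->
  0 < gamma < 1 ->
  (forall i j : 'I_n.+1, shortest_dist step (loc s0 r i) (loc s0 r j) (d i j)) ->
  is_NN_order d sNN ->
  route_value gamma d sNN / OPT gamma d >= 1 / n%:R.
Proof.
(* The bound holds for any distance table d, so the MDP structure is unused. *)
case: n r d sNN => [//|n'] r d sNN _ _ /andP[g0 g1] _ hNN.
have gamma01 : 0 <= gamma <= 1 by rewrite !ltW.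
set m := route_time d sNN 0.
have all_late (s : {perm 'I_n'.+1}) j : (m <= route_time d s j)%N.
  apply: leq_trans _ (route_time0_leq d s j).
  by rewrite (route_time0 d s); apply: NN_first_step.
have NN_ge : gamma ^+ m <= route_value gamma d sNN by rewrite route_value_ge_first ?ltW.
have OPT_le_n : OPT gamma d <= n'.+1%:R * gamma ^+ m.
  by apply: OPT_le => [|s]; [rewrite mulr_ge0 ?exprn_ge0 ?ltW | exact: route_value_le].
have gm_gt0 : 0 < gamma ^+ m by rewrite exprn_gt0.
have OPT_gt0 : 0 < OPT gamma d.
  exact: lt_le_trans gm_gt0 (le_trans NN_ge (route_value_le_OPT _ _ _)).
rewrite ler_pdivlMr // mul1r mulrC ler_pdivrMr ?ltr0n //.
by apply: le_trans OPT_le_n _; rewrite mulrC ler_pM2r ?ltr0Sn.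
Qed.
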